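(* Let $n>k+\ell$, and let $\mathcal F\subset\binom{[n]}{k}$ (non-trivial) and $\mathcal G\subset\binom{[n]}{\ell}$ be cross-intersecting families forming a saturated pair, shifted ad extremis with respect to $\tau(\mathcal F)\ge2$, and not both initial. Then the 2-cover graph $\hat{\mathcal H}$ of $\mathcal F$ is partially shifted.
   Context: Non-trivial: nonempty and not a star (a star is a family all of whose members share a common element); $\tau(\mathcal F)\ge2$ means $\mathcal F$ is not a star. Cross-intersecting: $F\cap G\ne\emptyset$ for all $F\in\mathcal F,G\in\mathcal G$; saturated pair: adding any further $k$-set to $\mathcal F$ or $\ell$-set to $\mathcal G$ destroys cross-intersection. Shifting: for $i<j$, $S_{ij}(F)=(F\setminus\{j\})\cup\{i\}$ if $j\in F$, $i\notin F$, $(F\setminus\{j\})\cup\{i\}\notin\mathcal F$, else $S_{ij}(F)=F$; $S_{ij}(\mathcal F)=\{S_{ij}(F):F\in\mathcal F\}$. Shifted ad extremis with respect to $\tau(\mathcal F)\ge2$: for every $1\le i<j\le n$, either $S_{ij}(\mathcal F)=\mathcal F$ and $S_{ij}(\mathcal G)=\mathcal G$, or $S_{ij}(\mathcal F)$ is a star. Initial: with $(a_1,\dots,a_k)\prec(b_1,\dots,b_k)$ iff $a_i\le b_i$ for all $i$, a family is initial if $A\prec B\in\mathcal F$ implies $A\in\mathcal F$. The 2-cover graph $\hat{\mathcal H}$ has vertex set $[n]$ and edges $\{i,j\}$ such that every $F\in\mathcal F$ meets $\{i,j\}$. A graph on $[n]$ is partially shifted if for all distinct $i,j,x$ with $x<j$: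 $\{i,j\}$ an edge and $\{x,j\}$ a non-edge imply $\{i,x\}$ is an edge. *)

(* Ground set [n] is modelled as 'I_n = {0,...,n-1}
   (order-preserving relabelling of {1,...,n}). *)
From mathcomp Require Import all_boot all_order.
Set Implicit Arguments. Unset Strict Implicit. Unset Printing Implicit Defensive.

Section Defs.
Variable n : nat.
Notation fam := {set {set 'I_n}}.

Definition uniform (k : nat) (FF : fam) : Prop :=
  forall F, F \in FF -> #|F| = k.

Definition star (FF : fam) : Prop :=
  exists x : 'I_n, forall F, F \in FF -> x \in F.

(* non-trivial: nonempty and not a star (tau(F) >= 2) *)
Definition nontrivial (FF : fam) : Prop := FF != set0 /\ ~ star FF.

Definition cross_intersecting (FF GG : fam) : Prop :=
  forall F G, F \in FF -> G \in GG -> F :&: G != set0.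

Definition saturated (k l : nat) (FF GG : fam) : Prop :=
  (forall A : {set 'I_n}, #|A| = k -> A \notin FF ->
      ~ cross_intersecting (A |: FF) GG) /\
  (forall B : {set 'I_n}, #|B| = l -> B \notin GG ->
      ~ cross_intersecting FF (B |: GG)).

Definition shift_set (i j : 'I_n) (FF : fam) (F : {set 'I_n}) : {set 'I_n} :=
  if (j \in F) && (i \notin F) && ((i |: (F :\ j)) \notin FF)
  then i |: (F :\ j) else F.

Definition shift (i j : 'I_n) (FF : fam) : fam :=
  [set shift_set i j FF F | F in FF].

Definition shifted_ad_extremis (FF GG : fam) : Prop :=
  forall i j : 'I_n, i < j ->
    (shift i j FF = FF /\ shift i j GG = GG) \/ star (shift i j FF).

Definition elems (A : {set 'I_n}) : seq nat := sort leq (map val (enum A)).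

Definition prec (A B : {set 'I_n}) : Prop :=
  #|A| = #|B| /\ forall t, t < #|A| -> nth 0 (elems A) t <= nth 0 (elems B) t.

Definition initial (FF : fam) : Prop :=
  forall A B : {set 'I_n}, prec A B -> B \in FF -> A \in FF.

Definition cover2_edge (FF : fam) (i j : 'I_n) : Prop :=
  i != j /\ forall F, F \in FF -> (i \in F) || (j \in F).

Definition partially_shifted (E : 'I_n -> 'I_n -> Prop) : Prop :=
  forall i j x : 'I_n, i != j -> i != x -> j != x -> x < j ->
    E i j -> ~ E x j -> E i x.

End Defs.

From mathcomp Require Import all_boot all_order.

Set Implicit Arguments.
Unset Strict Implicit.
Unset Printing Implicit Defensive.

(* Take an edge {i,j} and a non-neighbour x < j of j.  If S_xj fixes the
   family, a member containing j but neither i nor x would be shifted to a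
   member avoiding both i and j, which is impossible as {i,j} is a 2-cover.
   Otherwise S_xj(F) is a star; its centre must be x (the shift only adds x,
   so a centre y <> x would already be a centre of F), and then every member
   of F meets {x,j}, contradicting the choice of x. *)

Section ShiftSet.
Variables (n : nat) (i j : 'I_n) (FF : {set {set 'I_n}}).

Lemma mem_shift_set y F : y != i -> y \in shift_set i j FF F -> y \in F.
Proof.
move=> yi; rewrite /shift_set; case: ifP => // _.
by rewrite !inE (negbTE yi) => /andP[].
Qed.

Lemma mem_shift_set_added F :
  i \in shift_set i j FF F -> (i \in F) || (j \in F).
Proof.
by rewrite /shift_set; case: ifP => [/andP[/andP[-> _] _]|_ ->]; rewrite ?orbT.
Qed.

Lemma shift_fixed_mem F : shift i j FF = FF -> F \in FF ->
  j \in F -> i \notin F -> i |: (F :\ j) \in FF.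
Proof.
move=> fixFF FFF jF iF; apply: contraT => shiftFF.
have : i |: (F :\ j) \in shift i j FF.
  by apply/imsetP; exists F; rewrite // /shift_set jF iF shiftFF.
by rewrite fixFF (negbTE shiftFF).
Qed.

Lemma star_shift_cover F : star (shift i j FF) -> ~ star FF ->
  F \in FF -> (i \in F) || (j \in F).
Proof.
move=> [y yS] nstar FFF; have [yi|yi] := eqVneq y i.
  have := yS _ (imset_f (shift_set i j FF) FFF).
  by rewrite yi => /mem_shift_set_added.
by case: nstar; exists y => G FFG; apply: (mem_shift_set yi); rewrite yS ?imset_f.
Qed.

End ShiftSet.

Theorem proposition1p3 (n k l : nat)
  (FF GG : {set {set 'I_n}}) :
  k + l < n ->
  uniform k FF -> uniform l GG ->
  nontrivial FF ->
  cross_intersecting FF GG ->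
  saturated k l FF GG ->
  shifted_ad_extremis FF GG ->
  ~ (initial FF /\ initial GG) ->
  partially_shifted (cover2_edge FF).
Proof.
move=> _ _ _ [_ nstar] _ _ sae _ i j x _ nix njx xj [_ coverij] ncoverxj.
split=> // F FFF.
case: (sae x j xj) => [[fixFF _] | starS].
- case iF: (i \in F) => //=; apply: contraT => xF.
  have jF : j \in F by have := coverij F FFF; rewrite iF.
  have := coverij _ (shift_fixed_mem fixFF FFF jF xF).
  by rewrite !inE iF (negbTE nix) (negbTE njx) eqxx andbF.
- exfalso; apply: ncoverxj; split; first by rewrite eq_sym.
  by move=> G; apply: star_shift_cover.
Qed.
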